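(* Let $k\in\mathbb{N}$, let $q>1$, and let $\tilde\chi_q$ be a modified character modulo $q$. Let $I_k=\{n+1,\dots,n+k\}$ (with $n\ge0$) be a block of $k$ consecutive positive integers and let $r=\#\{m\in I_k:\tilde\chi_q(m)=-1\}$. Let $P_r=\{p_1,\dots,p_r\}$ be any set of $r$ distinct primes with $p_i>k$ and $p_i\nmid q$ for all $i$, and define $f(m)=\tilde\chi_q(m)\lambda_{P_r}(m)$. Then there exists $n'\in\mathbb{N}\cup\{0\}$ such that $f(n'+1)=f(n'+2)=\cdots=f(n'+k)=+1$.
   Context: For a real Dirichlet character $\chi_q$ modulo $q>1$, a modified character $\tilde\chi_q$ is the completely multiplicative function $\mathbb{N}\to\{+1,-1\}$ with $\tilde\chi_q(p)=\chi_q(p)$ for primes $p\nmid q$ and $\tilde\chi_q(p)=\eta(p)\in\{+1,-1\}$ (an arbitrary sign) for primes $p\mid q$. For a set $S$ of primes, $\lambda_S$ is the completely multiplicative function with $\lambda_S(p)=-1$ if $p\in S$ and $\lambda_S(p)=+1$ for primes $p\notin S$. *)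

From mathcomp Require Import all_boot all_order all_algebra.
Set Implicit Arguments. Unset Strict Implicit. Unset Printing Implicit Defensive.
Import Order.TTheory GRing.Theory Num.Theory.
Local Open Scope ring_scope.

Definition real_dirichlet_char (q : nat) (chi : nat -> int) : Prop :=
  [/\ chi 1%N = 1,
      (forall m n : nat, chi (m * n)%N = chi m * chi n),
      (forall n : nat, chi (n + q)%N = chi n),
      (forall n : nat, coprime n q -> chi n = 1 \/ chi n = -1) &
      (forall n : nat, ~~ coprime n q -> chi n = 0)].

Definition modchar (q : nat) (chi eta : nat -> int) (n : nat) : int :=
  \prod_(p <- primes n) (if (p %| q)%N then eta p else chi p) ^+ logn p n.

Definition lambdaS (S : seq nat) (n : nat) : int :=
  (-1) ^+ (\sum_(p <- S) logn p n)%N.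

From mathcomp Require Import all_boot all_order all_algebra zify.
Import GRing.Theory.

(* Shifting n by a multiple of q * D, where D is the product of the q-parts of
   n + 1, ..., n + k, does not change the modified character on the block: the
   q-part of each entry is untouched and its coprime part moves by a multiple
   of q. By the Chinese remainder theorem the shift can be chosen so that the
   i-th prime of P divides exactly (to the first power) the i-th entry where the
   character is -1; since these primes exceed k, they divide no other entry, so
   lambda_P flips precisely the entries where the character is -1. *)

Set Implicit Arguments.
Unset Strict Implicit.
Unset Printing Implicit Defensive.

Section PrimeProduct.

Variables (R : comNzRingType) (f : nat -> R).

Definition prime_prod (n : nat) : R := (\prod_(p <- primes n) f p ^+ logn p n)%R.

Lemma prime_prod_iota B n : 0 < n -> n < B ->
  prime_prod n = (\prod_(p <- iota 0 B) f p ^+ logn p n)%R.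
Proof.
move=> n_gt0 n_ltB; rewrite (bigID (mem (primes n))) /= [X in (_ * X)%R]big1.
  rewrite mulr1 -big_filter; apply/perm_big/uniq_perm.
  - exact: primes_uniq.
  - by rewrite filter_uniq ?iota_uniq.
  move=> p; rewrite mem_filter mem_iota andbC.
  case: (boolP (p \in primes n)) => [|_]; last by rewrite andbF.
  by rewrite mem_primes => /and3P[_ _ /(dvdn_leq n_gt0)] p_le_n; lia.
move=> p p_n; suff -> : logn p n = 0 by rewrite expr0.
by apply/eqP; rewrite -leqn0 leqNgt logn_gt0.
Qed.

Lemma prime_prodM a b : 0 < a -> 0 < b ->
  prime_prod (a * b) = (prime_prod a * prime_prod b)%R.
Proof.
move=> a_gt0 b_gt0; have ab_gt0 : 0 < a * b by rewrite muln_gt0 a_gt0.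
rewrite !(@prime_prod_iota (a * b).+1) ?ltnS ?leq_pmulr ?leq_pmull //.
by rewrite -big_split; apply: eq_bigr => p _; rewrite lognM // exprD.
Qed.

Lemma prime_prod_sqr n : (forall p, prime p -> f p ^+ 2 = 1)%R ->
  (prime_prod n ^+ 2 = 1)%R.
Proof.
move=> f_sqr; rewrite -prodrXl big_seq big1 // => p.
by rewrite mem_primes => /and3P[p_pr _ _]; rewrite -exprM mulnC exprM f_sqr ?expr1n.
Qed.

Lemma prime_prod_multiplicative (g : nat -> R) n :
  g 1 = 1%R -> {morph g : a b / a * b >-> (a * b)%R} -> 0 < n ->
  {in primes n, f =1 g} -> prime_prod n = g n.
Proof.
move=> g1 gM n_gt0 fg; rewrite {2}(prod_prime_decomp n_gt0) prime_decompE big_map.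
rewrite (big_morph g gM g1) /prime_prod !big_seq; apply: eq_bigr => p /fg -> /=.
by elim: (logn p n) => [|e IHe]; rewrite ?expn0 ?expr0 // expnS gM -IHe exprS.
Qed.

End PrimeProduct.

Lemma chinese_seq (I : eqType) (md : I -> nat) (S : I -> nat -> Prop) (s : seq I) :
  pairwise (fun i j => coprime (md i) (md j)) s ->
  (forall i, i \in s -> exists t, S i t) ->
  (forall i t t', i \in s -> t = t' %[mod md i] -> S i t -> S i t') ->
  exists t, forall i, i \in s -> S i t.
Proof.
elim: s => [|a s IHs]; first by exists 0.
rewrite pairwise_cons => /andP[co_a co_s] solvable invariant.
have [t1 t1_s] : exists t, forall i, i \in s -> S i t.
  apply: IHs => // [i i_s|i t t' i_s]; [apply: solvable|apply: invariant];
  by rewrite inE i_s orbT.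
have [t0 t0_a] := solvable a (mem_head _ _).
set M := (\prod_(i <- s) md i)%N.
have co_aM : coprime (md a) M.
  rewrite /M big_seq; apply: (big_ind (coprime (md a))) => [|x y|i].
  - exact: coprimen1.
  - by rewrite coprimeMr => ->.
  - exact: (allP co_a).
exists (chinese (md a) M t0 t1) => i; rewrite inE => /predU1P[->|i_s].
  by apply: (invariant a t0 _ (mem_head _ _) _ t0_a); rewrite chinese_modl.
apply: (invariant i t1 _ _ _ (t1_s i i_s)); first by rewrite inE i_s orbT.
have md_M : md i %| M by rewrite /M (big_rem i i_s) dvdn_mulr.
by rewrite -(modn_dvdm t1 md_M) -(modn_dvdm (chinese _ _ _ _) md_M) chinese_modr.
Qed.

Lemma linear_congruence Q d y r : 0 < d -> coprime Q d ->
  exists t, y + Q * t = r %[mod d].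
Proof.
move=> d_gt0 co_Qd; have [a _] := Bezoutl Q d_gt0.
rewrite gcdnC (eqP co_Qd) => /dvdnP[c aQ1].
(* a * Q = -1 and w = y - r modulo d *)
set w := y + (d - 1) * r; exists (a * w).
apply/eqP; rewrite -(eqn_modDr w); apply/eqP.
have -> : y + Q * (a * w) + w = c * w * d + y by nia.
have -> : r + w = r * d + y by rewrite /w; nia.
by rewrite !modnMDl.
Qed.

Lemma logn_mod_sq p z : prime p -> z %% p ^ 2 = p -> logn p z = 1.
Proof.
move=> p_pr z_mod; have p_gt1 := prime_gt1 p_pr.
have -> : z = p * (z %/ p ^ 2 * p + 1) by rewrite {1}(divn_eq z (p ^ 2)) z_mod; lia.
rewrite lognM ?addn_gt0 ?orbT ?prime_gt0 // logn_prime // eqxx lognE.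
case: ifP => //= /and3P[_ _]; rewrite dvdn_addr ?dvdn_mull // dvdn1 => /eqP p1.
by rewrite p1 in p_gt1.
Qed.

Lemma dvdn_add_small_inj p z b m : b < p -> m < p -> p %| z + b -> p %| z + m -> b = m.
Proof.
move=> b_lt m_lt /eqP zb /eqP zm.
have : b = m %[mod p] by apply/eqP; rewrite -(eqn_modDl z) zb zm.
by rewrite !modn_small.
Qed.

Lemma exists_shift_exact_prime_divisors (s : seq (nat * nat)) y Q :
  uniq (unzip1 s) -> (forall pr, pr \in s -> prime pr.1 /\ coprime Q pr.1) ->
  exists t, forall pr, pr \in s -> (y + Q * t + pr.2) %% pr.1 ^ 2 = pr.1.
Proof.
move=> uniq_s s_pr.
apply: (@chinese_seq _ (fun pr => pr.1 ^ 2)).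
- rewrite -(pairwise_map fst (fun p p' => coprime (p ^ 2) (p' ^ 2))).
  move: uniq_s; rewrite uniq_pairwise; apply: (sub_in_pairwise (P := prime)).
    by move=> p p' p_pr p'_pr neq; rewrite coprimeXl ?coprimeXr // prime_coprime // dvdn_prime2.
  by apply/allP => _ /mapP[pr /s_pr[p_pr _] ->].
- move=> pr /s_pr[p_pr co_Qp]; have p_gt1 := prime_gt1 p_pr.
  have p2_gt0 : 0 < pr.1 ^ 2 by rewrite expn_gt0 prime_gt0.
  have [t yt] := linear_congruence (y + pr.2) pr.1 p2_gt0 (coprimeXr 2 co_Qp).
  by exists t; rewrite addnAC yt modn_small // -{1}(expn1 pr.1) ltn_exp2l.
- move=> pr t t' _ tt' /= /(etrans _); apply.
  rewrite -[y + Q * t' + _]addnAC -[y + Q * t + _]addnAC; apply/eqP.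
  by rewrite eqn_modDl -modnMmr -tt' modnMmr.
Qed.

Lemma lambdaS_exact_divisors (s : seq (nat * nat)) k z m :
  uniq (unzip2 s) -> m <= k ->
  (forall pr, pr \in s ->
    [/\ prime pr.1, k < pr.1, pr.2 <= k & (z + pr.2) %% pr.1 ^ 2 = pr.1]) ->
  lambdaS (unzip1 s) (z + m) = ((-1) ^+ (m \in unzip2 s))%R.
Proof.
move=> uniq_s2 m_le s_pr; rewrite /lambdaS big_map -(count_uniq_mem m uniq_s2).
rewrite count_map -sum1_count; congr (_ ^+ _)%R; rewrite [RHS]big_mkcond /=.
apply: eq_big_seq => pr /s_pr[p_pr k_lt b_le z_mod] /=.
case: eqP => [<-|neq_bm]; first exact: logn_mod_sq.
apply/eqP; rewrite -leqn0 leqNgt logn_gt0 mem_primes p_pr /=.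
apply/negP => /andP[_ dvd_m]; apply: neq_bm.
have : 0 < logn pr.1 (z + pr.2) by rewrite logn_mod_sq.
rewrite logn_gt0 mem_primes => /and3P[_ _ dvd_b].
by apply: (dvdn_add_small_inj _ _ dvd_b dvd_m); lia.
Qed.

Lemma coprime_pi_part_prod q p (s : seq nat) : 0 < q -> prime p -> ~~ (p %| q) ->
  coprime (q * \prod_(x <- s) x`_\pi(q)) p.
Proof.
move=> q_gt0 p_pr p_ndvd_q; apply: (@pnat_coprime \pi(q)).
  rewrite pnatM pnat_pi //=; apply: (big_ind (pnat \pi(q))) => // [x y|x _].
    by rewrite pnatM => -> ->.
  exact: part_pnat.
by rewrite pnatE // !inE /= mem_primes p_pr q_gt0.
Qed.

Section ModifiedCharacter.

Variables (q : nat) (chi eta : nat -> int).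
Hypothesis chi_real : real_dirichlet_char q chi.

Lemma modcharE : modchar q chi eta =1 prime_prod (fun p => if p %| q then eta p else chi p).
Proof. by []. Qed.

Lemma modcharM a b : 0 < a -> 0 < b ->
  modchar q chi eta (a * b) = (modchar q chi eta a * modchar q chi eta b)%R.
Proof. by move=> a_gt0 b_gt0; rewrite !modcharE prime_prodM. Qed.

Lemma modchar_sign n : (forall p, prime p -> p %| q -> (eta p = 1 \/ eta p = -1)%R) ->
  (modchar q chi eta n = 1 \/ modchar q chi eta n = -1)%R.
Proof.
have [_ _ _ chi_sign _] := chi_real; move=> eta_sign.
have /eqP : (modchar q chi eta n ^+ 2 = 1)%R.
  rewrite modcharE; apply: prime_prod_sqr => p p_pr; case: ifP => [p_q|p_nq].
    by case: (eta_sign p p_pr p_q) => ->; rewrite ?sqrrN expr1n.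
  have : coprime p q by rewrite prime_coprime // p_nq.
  by move/chi_sign => [] ->; rewrite ?sqrrN expr1n.
by rewrite sqrf_eq1 => /orP[] /eqP; [left|right].
Qed.

Lemma modchar_coprime u : 0 < u -> coprime u q -> modchar q chi eta u = chi u.
Proof.
have [chi1 chiM _ _ _] := chi_real; move=> u_gt0 co_uq.
rewrite modcharE; apply: prime_prod_multiplicative => // p.
rewrite mem_primes => /and3P[p_pr _ p_u]; case: ifP => // p_q.
by have := coprime_dvdl p_u co_uq; rewrite prime_coprime // p_q.
Qed.

Lemma chi_addMn x j : chi (x + q * j) = chi x.
Proof.
have [_ _ chi_per _ _] := chi_real.
by elim: j => [|j IHj]; rewrite ?muln0 ?addn0 // mulnS addnCA addnC chi_per.
Qed.

Lemma modchar_shift x D t : 0 < q -> 0 < x -> x`_\pi(q) %| D ->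
  modchar q chi eta (x + q * D * t) = modchar q chi eta x.
Proof.
move=> q_gt0 x_gt0 /dvdnP[D' ->].
set d := x`_\pi(q); set u := x`_\pi(q)^'.
have du : d * u = x by rewrite partnC.
have u_gt0 : 0 < u by rewrite part_gt0.
have co_uq : coprime u q by rewrite coprime_sym (pnat_coprime (pnat_pi q_gt0)) ?part_pnat.
have -> : x + q * (D' * d) * t = d * (u + q * (D' * t)) by rewrite -du; lia.
have d_gt0 : 0 < d by rewrite part_gt0.
rewrite -du !modcharM ?addn_gt0 ?u_gt0 //; congr (_ * _)%R.
rewrite !modchar_coprime ?addn_gt0 ?u_gt0 ?chi_addMn //.
by rewrite -coprime_modl addnC mulnC modnMDl coprime_modl.
Qed.

End ModifiedCharacter.

Local Open Scope ring_scope.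

Theorem lemma2p1 (k q : nat) (chi eta : nat -> int) (n : nat) (P : seq nat) :
  (1 < q)%N ->
  real_dirichlet_char q chi ->
  (forall p : nat, prime p -> (p %| q)%N -> eta p = 1 \/ eta p = -1) ->
  uniq P ->
  (forall p : nat, p \in P -> [/\ prime p, (k < p)%N & ~~ (p %| q)%N]) ->
  size P = count (fun m : nat => modchar q chi eta m == -1) (iota n.+1 k) ->
  exists n' : nat, forall m : nat, (1 <= m <= k)%N ->
    modchar q chi eta (n' + m) * lambdaS P (n' + m) = 1.
Proof.
move=> q_gt1 chi_real eta_sign uniq_P P_prime size_P; have q_gt0 := ltnW q_gt1.
set M := [seq m <- iota 1 k | modchar q chi eta (n + m) == -1].
have size_PM : size P = size M by rewrite size_P size_filter -addn1 iotaDl count_map.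
have [P_zip M_zip] := (unzip1_zip (eq_leq size_PM), unzip2_zip (eq_leq (esym size_PM))).
have mem_PM pr : pr \in zip P M -> pr.1 \in P /\ pr.2 \in M.
  by move=> pr_PM; rewrite -{1}P_zip -{2}M_zip; split; apply: map_f.
set D := (\prod_(x <- iota n.+1 k) x`_\pi(q))%N.
have [t t_exact] : exists t, forall pr, pr \in zip P M ->
    ((n + q * D * t + pr.2) %% pr.1 ^ 2 = pr.1)%N.
  apply: (exists_shift_exact_prime_divisors n (Q := (q * D)%N)); first by rewrite P_zip.
  move=> pr /mem_PM[/P_prime[p_pr _ p_ndvd_q] _].
  by rewrite p_pr coprime_pi_part_prod.
exists (n + q * D * t)%N => m /andP[m_ge1 m_le_k].
rewrite {1}addnAC modchar_shift //; last 2 first.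
- by rewrite addn_gt0 m_ge1 orbT.
- by rewrite /D (big_rem (n + m)%N) ?dvdn_mulr // mem_iota; lia.
rewrite -P_zip (lambdaS_exact_divisors (k := k)) ?M_zip ?filter_uniq ?iota_uniq //; last first.
  move=> pr /[dup] /t_exact z_mod /mem_PM[/P_prime[p_pr k_lt_p _]].
  by rewrite mem_filter mem_iota => /andP[_ /andP[_ b_lt]]; split=> //; lia.
rewrite mem_filter mem_iota m_ge1 add1n ltnS m_le_k andbT.
by case: (modchar_sign chi_real (n + m) eta_sign) => ->; rewrite ?eqxx ?mulr1 ?mulrNN.
Qed.
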